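(* Let $p>2$ be prime, $u\in\mathbb{F}_p^*$ a non-square, $T'=\{\begin{pmatrix}a&bu\\ b&a\end{pmatrix}: a,b\in\mathbb{F}_p,\ a^2-ub^2\neq 0\}\subset {\rm GL}_2(\mathbb{F}_p)$, $Z$ the subgroup of scalar matrices, and $w=\begin{pmatrix}0&-1\\1&0\end{pmatrix}$. Then in the group ring $\mathbb{Q}[{\rm PGL}_2(\mathbb{F}_p)]$ the $T'$-trace element $\sum_{M\in T'/Z}M$ is equal to $${\rm id}+\sum_{r\in\mathbb{F}_p}\begin{pmatrix}1&r\\0&1\end{pmatrix}w\begin{pmatrix}1&r\\0&r^2-u\end{pmatrix}.$$
   Context: Matrices are viewed via their images in ${\rm PGL}_2(\mathbb{F}_p)={\rm GL}_2(\mathbb{F}_p)/Z$. *)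

From HB Require Import structures.
From mathcomp Require Import all_boot all_order all_algebra all_fingroup.
Set Implicit Arguments. Unset Strict Implicit. Unset Printing Implicit Defensive.
Import GRing.Theory.
Local Open Scope ring_scope.

Definition mx2 (R : Type) (a b c d : R) : 'M[R]_2 :=
  \matrix_(i < 2, j < 2)
    if (i : nat) == 0%N then (if (j : nat) == 0%N then a else b)
    else (if (j : nat) == 0%N then c else d).

(* An (invertible) 2x2 matrix viewed as an element of GL_2(F_p); the default 1
   is only used for non-invertible input, which never occurs below. *)
Definition toGL (p : nat) (A : 'M['F_p]_2) : {'GL_2['F_p]} := @insubd _ _ {'GL_2['F_p]} (1%g : {'GL_2['F_p]}) A.

Definition Zsc (p : nat) : {set {'GL_2['F_p]}} :=
  [set g : {'GL_2['F_p]} | is_scalar_mx (GLval g)].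

Definition PGL2 (p : nat) := coset_of (Zsc p).

Definition pgl (p : nat) (g : {'GL_2['F_p]}) : PGL2 p := coset (Zsc p) g.

Definition Tprime (p : nat) (u : 'F_p) : {set {'GL_2['F_p]}} :=
  [set g : {'GL_2['F_p]} | [exists a : 'F_p, exists b : 'F_p,
      GLval g == mx2 a (b * u) b a]].

(* Group ring Q[G] of a finite group: formal Q-linear combinations,
   i.e. finitely supported functions G -> Q (with pointwise addition). *)
Definition grpring (G : finType) := {ffun G -> rat}.

Definition gr (G : finType) (g : G) : grpring G := [ffun x => (x == g)%:R].

(** The product [[1,r],[0,1]] w [[1,r],[0,r^2-u]] is the matrix [[r,u],[1,r]].
    Every element [[a,bu],[b,a]] of T' with b != 0 is b times [[a/b,u],[1,a/b]],
    and those with b = 0 are scalar, so T'/Z consists of the identity and the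
    classes of [[r,u],[1,r]], r in F_p.  These classes are pairwise distinct
    (the lower-left entry pins the scalar to 1) and nontrivial, so the sum over
    T'/Z splits as stated. *)

From HB Require Import structures.
From mathcomp Require Import all_boot all_order all_algebra all_fingroup.
From mathcomp Require Import ring.
Import GRing.Theory.
Local Open Scope ring_scope.

Lemma mx2_inj {R : Type} {a b c d a' b' c' d' : R} :
  mx2 a b c d = mx2 a' b' c' d' -> [/\ a = a', b = b', c = c' & d = d'].
Proof.
move=> /matrixP eqM.
by have := eqM 0 0; have := eqM 0 1; have := eqM 1 0; have := eqM 1 1; rewrite !mxE.
Qed.

Lemma mul_mx2 (R : pzSemiRingType) (a b c d a' b' c' d' : R) :
  mx2 a b c d *m mx2 a' b' c' d' =
  mx2 (a * a' + b * c') (a * b' + b * d') (c * a' + d * c') (c * b' + d * d').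
Proof.
apply/matrixP => i j; rewrite !mxE !big_ord_recl big_ord0 !mxE /= addr0.
by case: i => [[|[|i]] ?]; case: j => [[|[|j]] ?].
Qed.

Lemma scale_mx2 (R : pzRingType) (k a b c d : R) :
  k *: mx2 a b c d = mx2 (k * a) (k * b) (k * c) (k * d).
Proof.
apply/matrixP => i j; rewrite !mxE.
by case: i => [[|[|i]] ?]; case: j => [[|[|j]] ?].
Qed.

Lemma scalar_mx2 (R : pzRingType) (k : R) : k%:M = mx2 k 0 0 k.
Proof.
apply/matrixP => i j; rewrite !mxE.
by case: i => [[|[|i]] ?]; case: j => [[|[|j]] ?].
Qed.

Lemma mx2_unitmx (R : comUnitRingType) (a b c d : R) :
  a * d - b * c \is a GRing.unit -> mx2 a b c d \in unitmx.
Proof.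
move=> det_unit.
have adj : mx2 a b c d *m mx2 d (- b) (- c) a = (a * d - b * c)%:M.
  by rewrite mul_mx2 scalar_mx2; congr mx2; ring.
suff /mulmx1_unit[] :
  mx2 a b c d *m ((a * d - b * c)^-1 *: mx2 d (- b) (- c) a) = 1%:M by [].
by rewrite -scalemxAr adj scale_scalar_mx mulVr.
Qed.

Lemma mx2_torus_factorization (R : comPzRingType) (u r : R) :
  mx2 1 r 0 1 *m mx2 0 (-1) 1 0 *m mx2 1 r 0 (r ^+ 2 - u) = mx2 r u 1 r.
Proof. by rewrite !mul_mx2; congr mx2; ring. Qed.

Section PGL2.
Variable p : nat.
Local Notation GL := {'GL_2['F_p]}.

Lemma Zsc_group_set : group_set (Zsc p).
Proof.
apply/group_setP; split; first by rewrite inE GL_1E scalar_mx_is_scalar.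
move=> x y; rewrite !inE => /is_scalar_mxP[a xa] /is_scalar_mxP[b yb].
by apply/is_scalar_mxP; exists (a * b); rewrite GL_MxE xa yb scalar_mxM.
Qed.

Canonical Zsc_group := Group Zsc_group_set.

Lemma Zsc_norm (x : GL) : x \in 'N(Zsc p)%g.
Proof.
apply: (subsetP (cent_sub _)); apply/centP => y; rewrite inE => /is_scalar_mxP[a ya].
apply: val_inj; change (GLval (x * y)%g = GLval (y * x)%g).
by rewrite !GL_MxE ya scalar_mxC.
Qed.

Lemma pgl_eqP (x y : GL) :
  reflect (exists a : 'F_p, GLval x = a%:M *m GLval y) (pgl x == pgl y).
Proof.
apply: (iffP eqP) => [/rcoset_kercosetP | [a xa]].
- case/(_ (Zsc_norm x) (Zsc_norm y))/rcosetP => z.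
  by rewrite inE => /is_scalar_mxP[a za] ->; exists a; rewrite GL_MxE za.
- apply/rcoset_kercosetP; rewrite ?Zsc_norm //; apply/rcosetP.
  exists (x * y^-1)%g; last by rewrite mulgKV.
  rewrite inE GL_MxE GL_VxE xa -mulmxA mulmxV ?GL_unitmx // mulmx1.
  exact: scalar_mx_is_scalar.
Qed.

Lemma pgl_eq1 (x : GL) : (pgl x == 1%g) = is_scalar_mx (GLval x).
Proof.
apply/idP/idP => [/eqP/(coset_idr (Zsc_norm x)) | scal_x]; first by rewrite inE.
by apply/eqP/coset_id; rewrite inE.
Qed.

Lemma toGLK (A : 'M['F_p]_2) : A \in unitmx -> GLval (toGL A) = A.
Proof. by move=> A_unit; rewrite /toGL val_insubd A_unit. Qed.

Lemma toGL_mul3K (A B C : 'M['F_p]_2) :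
  A \in unitmx -> B \in unitmx -> C \in unitmx ->
  GLval (toGL A * toGL B * toGL C)%g = A *m B *m C.
Proof. by move=> A_unit B_unit C_unit; rewrite !GL_MxE !toGLK. Qed.

Variable u : 'F_p.
Hypothesis u_nonsquare : ~~ [exists v : 'F_p, v ^+ 2 == u].

Definition torus_rep (r : 'F_p) : GL :=
  (toGL (mx2 1 r 0 1)%R * toGL (mx2 0 (-1) 1 0)%R
   * toGL (mx2 1 r 0 (r ^+ 2 - u))%R)%g.

Lemma sqr_sub_nonsquare_neq0 (r : 'F_p) : r ^+ 2 - u != 0.
Proof.
apply: contra u_nonsquare; rewrite subr_eq0 => r2u.
by apply/existsP; exists r.
Qed.

Lemma torus_repE (r : 'F_p) : GLval (torus_rep r) = mx2 r u 1 r.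
Proof.
have unitmx_mx2 (a b c d : 'F_p) : a * d - b * c != 0 -> mx2 a b c d \in unitmx.
  by rewrite -unitfE; apply: mx2_unitmx.
rewrite toGL_mul3K ?mx2_torus_factorization //; apply: unitmx_mx2;
  rewrite !(mul0r, mulr0, mul1r, mulr1, subr0, sub0r, opprK) ?oner_eq0 //.
exact: sqr_sub_nonsquare_neq0.
Qed.

Lemma pgl_torus_rep_neq1 (r : 'F_p) : pgl (torus_rep r) != 1%g.
Proof.
rewrite pgl_eq1 torus_repE; apply/is_scalar_mxP => -[a].
by rewrite scalar_mx2 => /mx2_inj[_ _ /eqP + _]; rewrite oner_eq0.
Qed.

Lemma pgl_torus_rep_inj : injective (fun r => pgl (torus_rep r)).
Proof.
(* Occurrences are targeted: an unrestricted search for [GLval (torus_rep _)]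
   tries to unify it with [a%:M] and takes minutes. *)
move=> r s /eqP/pgl_eqP[a]; rewrite [LHS]torus_repE [X in _ *m X]torus_repE.
rewrite mul_scalar_mx scale_mx2 => /mx2_inj[-> _ /esym + _].
by rewrite mulr1 => ->; rewrite mul1r.
Qed.

Lemma quotient_Tprime :
  (Tprime u / Zsc p)%g = (1%g : PGL2 p) |: [set pgl (torus_rep r) | r : 'F_p].
Proof.
have T_norm : Tprime u \subset 'N(Zsc p)%g by apply/subsetP => x _; apply: Zsc_norm.
apply/setP => C; rewrite quotientE morphimEsub //; apply/imsetP/setU1P.
- case=> g; rewrite inE => /existsP[a /existsP[b /eqP gE]] ->.
  have [b0 | b_neq0] := eqVneq b 0.
    left; apply/eqP; rewrite pgl_eq1 gE b0 mul0r -scalar_mx2.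
    exact: scalar_mx_is_scalar.
  right; apply/imsetP; exists (a / b) => //; apply/eqP/pgl_eqP; exists b.
  by rewrite gE torus_repE mul_scalar_mx scale_mx2 mulr1 [b * (a / b)]mulrC divfK.
- case=> [-> | /imsetP[r _ ->]].
    exists 1%g; last by rewrite morph1.
    rewrite inE; apply/existsP; exists 1; apply/existsP; exists 0.
    by rewrite mul0r -scalar_mx2 GL_1E.
  exists (torus_rep r) => //; rewrite inE; apply/existsP; exists r.
  by apply/existsP; exists 1; rewrite torus_repE mul1r.
Qed.

End PGL2.

Theorem proposition2p2 (p : nat) (u : 'F_p) :
  prime p -> (2 < p)%N ->
  u != 0 -> ~~ [exists v : 'F_p, v ^+ 2 == u] ->
  \sum_(C in (Tprime u / Zsc p)%g) gr C
  = gr (1%g : PGL2 p) +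
    \sum_(r : 'F_p)
      gr (pgl (toGL (mx2 1 r 0 1)%R * toGL (mx2 0 (-1) 1 0)%R
               * toGL (mx2 1 r 0 (r ^+ 2 - u))%R)%g).
Proof.
move=> _ _ _ u_nonsquare.
rewrite (quotient_Tprime _ _ u_nonsquare) big_setU1 /=; last first.
  by apply/imsetP => -[r _ /esym/eqP]; apply/negP/pgl_torus_rep_neq1.
rewrite big_imset; first by [].
by move=> r s _ _; apply: pgl_torus_rep_inj.
Qed.
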